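(* Let $G$ be an innately transitive permutation group on a finite set $\Omega$ with plinth $M$, let $\omega\in\Omega$ and $\mathcal E\in\mathrm{CD}(G)$. Then $M_{(\mathcal E)}=M$, the Cartesian system $\mathcal K_\omega(\mathcal E)$ is invariant under conjugation by $G_\omega$, and the actions of $G_\omega$ on $\mathcal K_\omega(\mathcal E)$ (by conjugation) and on $\mathcal E$ are permutationally equivalent.
   Context: A permutation group is innately transitive if it has a transitive minimal normal subgroup, called a plinth. A Cartesian decomposition of $\Omega$ is a set $\mathcal E=\{\Gamma_1,\dots,\Gamma_\ell\}$, $\ell\ge 2$, of partitions of $\Omega$ with $|\gamma_1\cap\cdots\cap\gamma_\ell|=1$ for all $\gamma_i\in\Gamma_i$; $\mathrm{CD}(G)$ is the set of $G$-invariant ones; $M_{(\mathcal E)}$ is the subgroup of $M$ fixing each partition in $\mathcal E$. If $M_{(\mathcal E)}=M$ and $\omega\in\Omega$, then $\mathcal K_\omega(\mathcal E)=\{M_{\gamma_1},\dots,M_{\gamma_\ell}\}$ where $\gamma_i$ is the block of $\Gamma_i$ containing $\omega$ and $M_{\gamma_i}$ is its setwise stabiliser; this is a Cartesian system of $M$ with respect to $\omega$, meaning $\bigcap_i K_i=M_\omega$ and $K_i(\bigcap_{j\ne i}K_j)=M$ for all $i$. *)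

From mathcomp Require Import all_boot all_order all_fingroup all_solvable.
Set Implicit Arguments. Unset Strict Implicit. Unset Printing Implicit Defensive.
Local Open Scope group_scope.

Section Defs.
Variable T : finType.

Definition partact := (('P^*)^*)%act : action [set: {perm T}] {set {set T}}.

Definition cart_decomp (E : {set {set {set T}}}) : Prop :=
  [/\ (2 <= #|E|)%N,
      forall Gam, Gam \in E -> partition Gam [set: T] &
      forall f : {set {set T}} -> {set T},
        (forall Gam, Gam \in E -> f Gam \in Gam) ->
        #|\bigcap_(Gam in E) f Gam| = 1%N].

Definition CD (G : {group {perm T}}) (E : {set {set {set T}}}) : Prop :=
  cart_decomp E /\ [acts G, on E | partact].

Definition plinth (G M : {group {perm T}}) : Prop :=
  [/\ M <| G, minnormal M G & [transitive M, on [set: T] | 'P]].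

Definition Mfix (M : {group {perm T}}) (E : {set {set {set T}}}) : {set {perm T}} :=
  'C_M(E | partact).

Definition cart_system (M : {group {perm T}}) (E : {set {set {set T}}}) (w : T)
  : {set {set {perm T}}} :=
  [set 'C_M[pblock Gam w | 'P^*] | Gam in E].

End Defs.

From mathcomp Require Import all_boot all_order all_fingroup all_solvable.
Set Implicit Arguments. Unset Strict Implicit. Unset Printing Implicit Defensive.
Local Open Scope group_scope.

(* The kernel of the minimal normal subgroup M on a G-orbit Eo of partitions
   in E is either M or trivial. If M moved some Gamma in E, it would therefore
   act faithfully on Eo, so |M| would divide s! with s = |Eo|. But all
   partitions in Eo have the same number n >= 2 of blocks, so n^s divides
   |Omega| = prod_(Gamma in E) |Gamma|, which divides |M| by transitivity; and
   no prime power p^s divides s! (Legendre). Hence M fixes every partition in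
   E. Being transitive, M then recovers the block gamma of Gamma through omega
   as the orbit of omega under M_gamma, and Gamma as the M-orbit of gamma, so
   Gamma |-> M_gamma is injective; G_omega-equivariance is the conjugation rule
   for stabilisers. *)

Lemma sum_divn_expS_lt p m n : 1 < p -> 0 < n -> \sum_(k < m) n %/ p ^ k.+1 < n.
Proof.
move=> p_gt1; elim: m n => [|m IHm] n n_gt0; first by rewrite big_ord0.
rewrite big_ord_recl expn1.
under eq_bigr => k _ do rewrite lift0 expnS divnMA.
have halve : n %/ p * 2 <= n by apply: leq_trans (leq_divM n p); apply: leq_mul.
have [->|np_gt0] := posnP (n %/ p); first by rewrite add0n big1 // => k _; rewrite div0n.
by apply: leq_trans halve; rewrite muln2 -addnn ltn_add2l; apply: IHm.
Qed.

Lemma logn_fact_lt p n : prime p -> 0 < n -> logn p n`! < n.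
Proof.
move=> p_pr n_gt0; rewrite logn_fact // big_add1 /= big_mkord.
by apply: sum_divn_expS_lt; rewrite ?prime_gt1.
Qed.

Lemma faithful_dvdn_fact (aT : finGroupType) (D : {group aT}) (rT : finType)
    (to : action D rT) (A : {group aT}) (S : {set rT}) (nSA : [acts A, on S | to]) :
  [faithful A, on S | to] -> #|A| %| #|S|`!.
Proof.
move=> ffulA; rewrite (isom_card (faithful_isom nSA ffulA)) -(perm.card_Sym S).
apply: cardSg; apply/subsetP => _ /morphimP[a _ Aa ->]; rewrite inE.
apply/subsetP => x; rewrite inE actpermE /= /actby Aa andbT.
by case: (x \in S); rewrite ?eqxx.
Qed.

Lemma minnormal_astab (aT : finGroupType) (D : {group aT}) (rT : finType)
    (to : action D rT) (G M : {group aT}) (S : {set rT}) :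
  minnormal M G -> [acts G, on S | to] -> 'C_M(S | to) = 1 \/ M \subset 'C(S | to).
Proof.
case/mingroupP => /andP[_ nMG] minM nSG.
have [->|ntC] := eqVneq 'C_M(S | to) 1; [by left | right].
have nCG : G \subset 'N('C_M(S | to)).
  by rewrite normsI //; apply: subset_trans nSG (astab_norm _ _).
by rewrite -(minM [group of 'C_M(S | to)]) ?subsetIr ?subsetIl ?ntC.
Qed.

Section Partitions.
Variable T : finType.
Implicit Types (P : {set {set T}}) (g : {perm T}).

Lemma partactE P g : partact T P g = [set [set g x | x in B] | B : {set T} in P].
Proof. by apply: eq_imset => B /=; apply: eq_imset. Qed.

Lemma im_permT g : [set g x | x in [set: T]] = [set: T].
Proof. by apply: im_perm_on; apply/subsetP => x; rewrite inE. Qed.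

Lemma mem_cover_partitionT P x : partition P [set: T] -> x \in cover P.
Proof. by move=> partP; rewrite (cover_partition partP) inE. Qed.

Lemma partition_partact P g :
  partition P [set: T] -> partition (partact T P g) [set: T].
Proof. by rewrite partactE -{2}(im_permT g) imset_partition //; apply: perm_inj. Qed.

Lemma pblock_partact P g x : partition P [set: T] ->
  pblock (partact T P g) (g x) = ('P^*)%act (pblock P x) g.
Proof.
move=> partP; have xP := mem_cover_partitionT x partP.
apply: def_pblock; first by apply: partition_trivIset; apply: partition_partact.
  by apply: imset_f; apply: pblock_mem.
by apply: imset_f; rewrite mem_pblock.
Qed.

Lemma partact_card_le1 P g :
  partition P [set: T] -> #|P| <= 1 -> partact T P g = P.
Proof.
move=> partP /card_le1_eqP P1.
have blockT B : B \in P -> B = [set: T].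
  move=> PB; apply/setP => x; rewrite inE.
  have /bigcupP[B' PB' xB'] := mem_cover_partitionT x partP.
  by rewrite (P1 B B' PB PB') in xB'.
rewrite partactE; apply: etrans (imset_id P); apply: eq_in_imset => B PB /=.
by rewrite (blockT B PB) im_permT.
Qed.

Lemma card_cart_decomp (E : {set {set {set T}}}) :
  cart_decomp E -> #|T| = (\prod_(Gam in E) #|Gam|)%N.
Proof.
case=> _ partE cartE.
have wE Gam x : Gam \in E -> x \in cover Gam.
  by move=> EGam; apply: mem_cover_partitionT (partE _ EGam).
pose coord x : {ffun {set {set T}} -> {set T}} :=
  [ffun Gam => if Gam \in E then pblock Gam x else set0].
have coordE Gam x : Gam \in E -> coord x Gam = pblock Gam x.
  by move=> EGam; rewrite ffunE EGam.
have coord_mem x Gam : Gam \in E -> coord x Gam \in Gam.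
  by move=> EGam; rewrite coordE // pblock_mem ?wE.
have coord_cap x : x \in \bigcap_(Gam in E) coord x Gam.
  by apply/bigcapP => Gam EGam; rewrite coordE // mem_pblock wE.
have coord_inj : injective coord.
  move=> x y xy; have /eqP/cards1P[z xz] := cartE _ (coord_mem x).
  by have := coord_cap x; have := coord_cap y; rewrite -xy xz !inE => /eqP-> /eqP->.
have -> : (\prod_(Gam in E) #|Gam|)%N = #|pfamily set0 E (fun Gam : {set {set T}} => Gam)|.
  by rewrite card_pfamily foldrE big_map big_enum.
rewrite -cardsT -(card_imset _ coord_inj); apply: eq_card => f.
apply/imsetP/pfamilyP => [[x _ ->]|[suppf famf]].
  split=> [|Gam]; last exact: coord_mem.
  by apply/supportP => Gam nEGam; rewrite ffunE (negPf nEGam).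
have /eqP/cards1P[z fz] := cartE f famf.
exists z => //; apply/ffunP => Gam; rewrite ffunE.
case: ifP => EGam; last by rewrite (supportP suppf) ?EGam.
have /bigcapP zf : z \in \bigcap_(Gam in E) f Gam by rewrite fz set11.
by apply/esym/def_pblock; [apply: partition_trivIset (partE _ EGam)|apply: famf|apply: zf].
Qed.

Lemma astab1_pblock_partact (M : {group {perm T}}) P g w :
  partition P [set: T] -> g \in 'N(M) -> g w = w ->
  'C_M[pblock (partact T P g) w | 'P^*] = 'C_M[pblock P w | 'P^*] :^ g.
Proof.
by move=> partP nMg gw; rewrite -{1}gw pblock_partact // conjIg (normP nMg) astab1_act.
Qed.

End Partitions.

Lemma plinth_astab_cart_decomp (T : finType) (G M : {group {perm T}})
    (E : {set {set {set T}}}) :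
  plinth G M -> CD G E -> M \subset 'C(E | partact T).
Proof.
move=> [nsMG minM trM] [cdE nEG]; have [_ partE _] := cdE.
apply/subsetP => m Mm; apply/astabP => Gam EGam; apply/eqP/negPn/negP => movedGam.
pose Eo := orbit (partact T) G Gam; pose n := #|Gam|.
have sEoE : Eo \subset E.
  by apply/subsetP => _ /orbitP[g Gg <-]; rewrite (acts_act nEG).
have nEoG : [acts G, on Eo | partact T] by apply: acts_orbit; apply: subsetT.
have nEoM : [acts M, on Eo | partact T] by apply: subset_trans nEoG; apply: normal_sub.
have EoGam : Gam \in Eo by apply: orbit_refl.
have ffulM : [faithful M, on Eo | partact T].
  case: (minnormal_astab minM nEoG) => [C1|]; first by rewrite /faithful C1.
  by move=> /subsetP/(_ m Mm)/astabP/(_ Gam EoGam)/eqP; rewrite (negPf movedGam).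
have n_gt1 : 1 < n.
  by rewrite ltnNge; apply: contra movedGam => /(partact_card_le1 m (partE _ EGam))/eqP.
have nEo_dvd_T : n ^ #|Eo| %| #|T|.
  rewrite (card_cart_decomp cdE) (big_setID Eo) /= (setIidPr sEoE).
  apply: dvdn_mulr; rewrite (eq_bigr (fun=> n)) ?prod_nat_const //.
  by move=> _ /orbitP[g _ <-]; apply: card_setact.
have dvd_fact : n ^ #|Eo| %| #|Eo|`!.
  apply: dvdn_trans nEo_dvd_T _; rewrite -cardsT.
  exact: dvdn_trans (atrans_dvd trM) (faithful_dvdn_fact nEoM ffulM).
have Eo_gt0 : 0 < #|Eo| by apply/card_gt0P; exists Gam.
have := logn_fact_lt (pdiv_prime n_gt1) Eo_gt0.
rewrite ltnNge -pfactor_dvdn ?pdiv_prime ?fact_gt0 // => /negP; apply.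
exact: dvdn_trans (dvdn_exp2r _ (pdiv_dvd n)) dvd_fact.
Qed.

Section CartesianSystem.
Variables (T : finType) (M : {group {perm T}}) (E : {set {set {set T}}}) (w : T).
Hypotheses (trM : [transitive M, on [set: T] | 'P])
  (partE : forall Gam, Gam \in E -> partition Gam [set: T])
  (fixE : M \subset 'C(E | partact T)).

Let pblock_fixed m Gam x : m \in M -> Gam \in E ->
  ('P^*)%act (pblock Gam x) m = pblock Gam (m x).
Proof.
move=> Mm EGam; rewrite -pblock_partact ?partE //.
by rewrite (astabP (subsetP fixE m Mm) _ EGam).
Qed.

Let transM x : exists2 m, m \in M & m w = x.
Proof.
have /orbitP[m Mm mw] : x \in orbit 'P M w by rewrite (atransP trM) ?inE.
by exists m.
Qed.

Lemma pblock_orbit_astab1 Gam :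
  Gam \in E -> pblock Gam w = orbit 'P 'C_M[pblock Gam w | 'P^*] w.
Proof.
move=> EGam; apply/setP => x; apply/idP/orbitP => [xw | [m /setIP[_ /astab1P fixB] <-]].
  have [m Mm mw] := transM x; exists m => //; rewrite inE Mm; apply/astab1P.
  by rewrite pblock_fixed // mw (same_pblock (partition_trivIset (partE EGam)) xw).
by rewrite -fixB; apply: mem_setact; rewrite mem_pblock mem_cover_partitionT ?partE.
Qed.

Lemma partition_orbit_pblock Gam :
  Gam \in E -> Gam = orbit 'P^* M (pblock Gam w).
Proof.
move=> EGam; have /and3P[_ tiGam nGam0] := partE EGam.
apply/setP => B; apply/idP/orbitP => [GamB | [m Mm <-]].
  have /set0Pn[x Bx] : B != set0 by apply: contraNneq nGam0 => <-.
  have [m Mm mw] := transM x; exists m => //.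
  by rewrite pblock_fixed // mw; apply: def_pblock.
by rewrite pblock_fixed // pblock_mem ?mem_cover_partitionT ?partE.
Qed.

Lemma astab1_pblock_inj : {in E &, injective (fun Gam => 'C_M[pblock Gam w | 'P^*])}.
Proof.
move=> Gam1 Gam2 EGam1 EGam2 /= eqC.
have eq_pblock : pblock Gam1 w = pblock Gam2 w.
  by rewrite (pblock_orbit_astab1 EGam1) (pblock_orbit_astab1 EGam2) eqC.
by rewrite (partition_orbit_pblock EGam1) (partition_orbit_pblock EGam2) eq_pblock.
Qed.

End CartesianSystem.

Theorem lemma2p3 (T : finType) (G M : {group {perm T}}) (w : T)
  (E : {set {set {set T}}}) :
  plinth G M -> CD G E ->
  [/\ Mfix M E = M,
      (forall g K, g \in 'C_G[w | 'P] -> K \in cart_system M E w ->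
         K :^ g \in cart_system M E w) &
      exists2 phi : {set {set T}} -> {set {perm T}},
        {in E &, injective phi} /\ phi @: E = cart_system M E w &
        forall g Gam, g \in 'C_G[w | 'P] -> Gam \in E ->
          phi (partact T Gam g) = phi Gam :^ g].
Proof.
move=> plinthM cdE; have fixE := plinth_astab_cart_decomp plinthM cdE.
have [[nsMG _ trM] [[_ partE _] nEG]] := (plinthM, cdE).
have conjC g Gam : g \in 'C_G[w | 'P] -> Gam \in E ->
    'C_M[pblock (partact T Gam g) w | 'P^*] = 'C_M[pblock Gam w | 'P^*] :^ g.
  move=> /setIP[Gg /astab1P gw] EGam.
  exact: astab1_pblock_partact (partE _ EGam) (subsetP (normal_norm nsMG) g Gg) gw.
split.
- exact/setIidPl.
- move=> g _ Gw_g /imsetP[Gam EGam ->]; apply/imsetP; exists (partact T Gam g).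
    by rewrite (acts_act nEG) //; case/setIP: Gw_g.
  by rewrite conjC.
- exists (fun Gam => 'C_M[pblock Gam w | 'P^*]); last exact: conjC.
  by split; first exact: astab1_pblock_inj trM partE fixE.
Qed.
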